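(* Let $n\ge 5$, $k\ge 2$ with $n-k\ge 2$, let $1\le i\le k$, and let $I\subseteq\langle n\rangle$ be nonempty. Then the subgraph $A^{(i,I)}_{n,k}$ of $A_{n,k}$ is Hamiltonian connected, i.e. for any two distinct vertices $u,v$ of $A^{(i,I)}_{n,k}$ there is a path from $u$ to $v$ visiting every vertex of $A^{(i,I)}_{n,k}$ exactly once.
   Context: For integers $n>k\ge 1$, let $\langle n\rangle=\{1,\dots,n\}$. The arrangement graph $A_{n,k}$ has vertex set the set of all sequences $u=u_1u_2\cdots u_k$ with $u_i\in\langle n\rangle$ and $u_i\ne u_j$ for $i\ne j$, and two vertices are adjacent iff they differ in exactly one position. For $l\in\langle k\rangle$ and $I\subseteq\langle n\rangle$, $A^{(l,I)}_{n,k}$ denotes the subgraph of $A_{n,k}$ induced by the set of vertices $p=p_1\cdots p_k$ with $p_l\in I$ (for $I=\{j\}$ this is written $A^{(l,j)}_{n,k}$, and it is isomorphic to $A_{n-1,k-1}$). *)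

From mathcomp Require Import all_boot.
Set Implicit Arguments. Unset Strict Implicit. Unset Printing Implicit Defensive.

(* Symbols <n> = {1,...,n} are represented by 'I_n = {0,...,n-1}
   (symbol s in the paper corresponds to s-1 here); positions 1..k by 'I_k. *)

Definition arr_vertex (n k : nat) := {t : k.-tuple 'I_n | uniq t}.

Definition arr_adj (n k : nat) : rel (arr_vertex n k) :=
  fun u v => #|[set j : 'I_k | tnth (val u) j != tnth (val v) j]| == 1.

Definition arr_sub (n k : nat) (l : 'I_k) (I : {set 'I_n}) : {set arr_vertex n k} :=
  [set p | tnth (val p) l \in I].

Definition ham_path (T : finType) (e : rel T) (S : {set T}) (u v : T)
    (p : seq T) : Prop :=
  [/\ uniq (u :: p), [set x in u :: p] = S, path e u p & last u p = v].

Definition ham_connected (T : finType) (e : rel T) (S : {set T}) : Prop :=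
  forall u v, u \in S -> v \in S -> u != v -> exists p, ham_path e S u v p.

From mathcomp Require Import all_boot zify.
Set Implicit Arguments. Unset Strict Implicit. Unset Printing Implicit Defensive.

(* Fixing the symbol in position i partitions A_{n+1,k+1} into the blocks
   A^{(i,j)}, each a copy of A_{n,k}, any two of them joined by many edges.
   The induction on k carries a stronger invariant: for every symbol b, any
   two vertices of A_{n,k} are joined by a Hamiltonian path containing an edge
   whose two ends avoid b.  For A_{n+1,k+1} it follows by chaining Hamiltonian
   paths of the blocks, some block other than the block of b supplying the
   b-avoiding edge; the base cases are the complete graphs A_{n,1} and A_{4,2},
   the latter checked by computation.  In A^{(i,I)}, two vertices in different
   blocks are joined by the same chaining.  Two vertices in one block A^{(i,a)}
   are joined by a Hamiltonian path of that block through an edge xy avoiding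
   some b in I - a; changing the i-th symbol of x and y to b gives two vertices
   of A^{(i,I-a)}, and a Hamiltonian path between them (by induction on |I|)
   is spliced in between x and y. *)

Definition has_edge (T : Type) (E : rel T) (s : seq T) : Prop :=
  exists s1 s2 x y, s = s1 ++ x :: y :: s2 /\ E x y.

Lemma has_edge_catl (T : Type) (E : rel T) s1 s2 :
  has_edge E s1 -> has_edge E (s1 ++ s2).
Proof.
by case=> [a [b [x [y [-> Exy]]]]]; exists a, (b ++ s2), x, y; rewrite -catA.
Qed.

Lemma has_edge_catr (T : Type) (E : rel T) s1 s2 :
  has_edge E s2 -> has_edge E (s1 ++ s2).
Proof.
by case=> [a [b [x [y [-> Exy]]]]]; exists (s1 ++ a), b, x, y; rewrite -catA.
Qed.

Lemma has_edge_cons2 (T : Type) (E : rel T) x y s :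
  E x y -> has_edge E [:: x, y & s].
Proof. by exists [::], s, x, y. Qed.

Section HamiltonianPaths.
Variables (T : finType) (e : rel T).

Definition ham_connected_through (S : {set T}) (E : rel T) : Prop :=
  forall u v, u \in S -> v \in S -> u != v ->
    exists2 p, ham_path e S u v p & has_edge E (u :: p).

Lemma ham_connected_throughW S E :
  ham_connected_through S E -> ham_connected e S.
Proof. by move=> H u v Su Sv uv; have [p Hp _] := H u v Su Sv uv; exists p. Qed.

Lemma ham_connected_through_any S :
  ham_connected e S -> ham_connected_through S (fun _ _ => true).
Proof.
move=> H u v Su Sv uv; have [p Hp] := H u v Su Sv uv; exists p => //.
case: p Hp => [|y p] [_ _ _ /= last_v]; first by rewrite last_v eqxx in uv.
exact: has_edge_cons2.
Qed.

Lemma ham_path_cat S1 S2 u x y v p1 p2 :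
    ham_path e S1 u x p1 -> ham_path e S2 y v p2 -> [disjoint S1 & S2] ->
    e x y ->
  ham_path e (S1 :|: S2) u v (p1 ++ y :: p2).
Proof.
move=> [U1 E1 P1 L1] [U2 E2 P2 L2] D12 exy; split.
- rewrite -cat_cons cat_uniq U1 U2 andbT andTb; apply/hasPn => z z2.
  apply: contraL z2 => z1; rewrite -[_ \in _]in_set E2.
  by rewrite (disjointFr D12) // -E1 inE.
- by apply/setP => z; rewrite -E1 -E2 !inE mem_cat inE orbA.
- by rewrite cat_path P1 L1 /= exy.
- by rewrite last_cat L1.
Qed.

Lemma ham_path_edge S u v p s1 s2 x y :
    ham_path e S u v p -> u :: p = s1 ++ x :: y :: s2 ->
  [/\ x \in S, y \in S & e x y].
Proof.
move=> [_ <- P _] def_p; rewrite !in_set def_p !mem_cat !inE !eqxx !orbT.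
split=> //.
have : sorted e (s1 ++ x :: y :: s2) by rewrite -def_p.
by rewrite sorted_cat_cons /= => /and3P [].
Qed.

Lemma ham_path_splice X R u v p s1 s2 x y x' y' q :
    ham_path e X u v p -> u :: p = s1 ++ x :: y :: s2 ->
    ham_path e R x' y' q -> [disjoint X & R] -> e x x' -> e y' y ->
  exists p', ham_path e (X :|: R) u v p'.
Proof.
move=> [U E P L] def_p [U' E' P' L'] DXR exx' ey'y.
set s := s1 ++ x :: x' :: q ++ y :: s2.
have def_s : s = u :: behead s by case: s1 def_p @s => [|a s1] [-> _].
have s_perm : perm_eq s ((u :: p) ++ x' :: q).
  rewrite def_p /s -catA perm_cat2l /= perm_cons.
  by rewrite -cat_cons -[y :: s2]cat0s perm_catC.
exists (behead s); split; rewrite -?def_s.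
- rewrite (perm_uniq s_perm) cat_uniq U U' andbT andTb; apply/hasPn => z zR.
  apply: contraL zR => zX; rewrite -[_ \in _]in_set E'.
  by rewrite (disjointFr DXR) // -E inE.
- by apply/setP => z; rewrite -E -E' !inE (perm_mem s_perm) mem_cat inE.
- have : sorted e (s1 ++ x :: y :: s2) by rewrite -def_p.
  rewrite !sorted_cat_cons /= => /andP [P1 /andP [_ P2]].
  have : sorted e s by rewrite /s sorted_cat_cons P1 /= exx' cat_path P' L' /= ey'y.
  by rewrite {1}def_s.
- have -> : last u (behead s) = last u s by rewrite {2}def_s.
  by rewrite -L -[last u p]/(last u (u :: p)) def_p /s !last_cat /= last_cat.
Qed.

Section Chain.
Variables (J : eqType) (B : J -> {set T}) (E : J -> rel T).
Hypothesis B_disjoint : forall j j', j != j' -> [disjoint B j & B j'].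
Hypothesis B_ham : forall j, ham_connected_through (B j) (E j).
Hypothesis B_link : forall j j', j != j' -> forall x0 z0,
  exists x y, [/\ x \in B j, y \in B j', x != x0, y != z0 & e x y].

Lemma ham_path_chain js j1 u v :
    uniq (j1 :: js) -> u \in B j1 -> v \in B (last j1 js) -> u != v ->
  exists2 p, ham_path e (\bigcup_(j <- j1 :: js) B j) u v p &
             forall j, j \in j1 :: js -> has_edge (E j) (u :: p).
Proof.
elim: js j1 u => [|j2 js IH] j1 u js_uniq Bu Bv uv.
  have [p Hp Ep] := B_ham Bu Bv uv.
  by exists p; rewrite ?big_seq1 // => j; rewrite inE => /eqP ->.
have /andP [j1_notin js2_uniq] := js_uniq.
have j12 : j1 != j2 by apply: contraNneq j1_notin => ->; apply: mem_head.
have [x [y [Bx By xu yv exy]]] := B_link j12 u v.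
have [p2 Hp2 Ep2] := IH j2 y js2_uniq By Bv yv.
have ux : u != x by rewrite eq_sym.
have [p1 Hp1 Ep1] := B_ham Bu Bx ux.
exists (p1 ++ y :: p2); last first.
  move=> j; rewrite -cat_cons inE => /predU1P [->|j_in].
    exact: has_edge_catl.
  exact/has_edge_catr/Ep2.
rewrite big_cons; apply: ham_path_cat Hp1 Hp2 _ exy.
rewrite -setI_eq0 big_distrr /= big_seq; apply/eqP/big1 => j j_in.
apply/eqP; rewrite setI_eq0; apply: B_disjoint.
by apply: contraNneq j1_notin => ->.
Qed.

End Chain.

Section Complete.
Hypothesis e_complete : forall x y, x != y -> e x y.

Lemma complete_path x s : uniq (x :: s) -> path e x s.
Proof.
elim: s x => //= y s IH x /andP [/norP [xy xs] ys].
by rewrite e_complete ?IH.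
Qed.

Lemma complete_ham_path u v pre : uniq [:: u, v & pre] ->
  ham_path e setT u v (pre ++ [seq x <- enum T | x \notin [:: u, v & pre]] ++ [:: v]).
Proof.
move=> U; set rest := [seq x <- _ | _].
have s_perm : perm_eq (u :: pre ++ rest ++ [:: v]) ([:: u, v & pre] ++ rest).
  by rewrite /= perm_cons catA perm_catC.
have s_uniq : uniq (u :: pre ++ rest ++ [:: v]).
  rewrite (perm_uniq s_perm) cat_uniq U filter_uniq ?enum_uniq // andbT.
  by apply/hasPn => z; rewrite mem_filter => /andP [].
split => //; last by rewrite catA cats1 last_rcons.
- apply/setP => z; rewrite in_setT in_set (perm_mem s_perm) mem_cat.
  by rewrite mem_filter mem_enum andbT; case: (_ \in _).
- exact: complete_path.
Qed.

Lemma complete_ham_through (P : pred T) :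
    (forall x y, ~~ P x -> ~~ P y -> x = y) -> 3 < #|T| ->
  ham_connected_through setT [rel x y | P x && P y].
Proof.
move=> P_almost T_big u v _ _ uv.
have /card_gt1P [g1 [g2 [G1 G2 g12]]] : 1 < #|[set x | (x != u) && (x != v)]|.
  move: T_big; rewrite -cardsT (cardsD1 u) (cardsD1 v) !inE eq_sym uv /=.
  by congr (_ < _.+2); apply: eq_card => z; rewrite !inE andbT andbC.
move: G1 G2; rewrite !inE => /andP [g1u g1v] /andP [g2u g2v].
have [Pu|Pu] := boolP (P u).
  have [g [Pg gu gv]] : exists g, [/\ P g, g != u & g != v].
    have [P1|P1] := boolP (P g1); first by exists g1.
    have [P2|P2] := boolP (P g2); first by exists g2.
    by rewrite (P_almost _ _ P1 P2) eqxx in g12.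
  exists (g :: [seq x <- enum T | x \notin [:: u; v; g]] ++ [:: v]).
    apply: (complete_ham_path (pre := [:: g])).
    by rewrite /= !inE negb_or uv eq_sym gu eq_sym gv.
  by apply: has_edge_cons2; rewrite /= Pu Pg.
have P1 : P g1 by apply: contraR g1u => P1; rewrite (P_almost _ _ P1 Pu).
have P2 : P g2 by apply: contraR g2u => P2; rewrite (P_almost _ _ P2 Pu).
exists [:: g1, g2 & [seq x <- enum T | x \notin [:: u; v; g1; g2]] ++ [:: v]].
  apply: (complete_ham_path (pre := [:: g1; g2])).
  by rewrite /= !inE !negb_or uv !(eq_sym u) g1u g2u !(eq_sym v) g1v g2v g12.
by apply: (has_edge_catr [:: u]); apply: has_edge_cons2; rewrite /= P1 P2.
Qed.

End Complete.

End HamiltonianPaths.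

Lemma ham_path_map (T T' : finType) (e : rel T) (e' : rel T') (f : T' -> T)
    S u v p :
    injective f -> {mono f : x y / e' x y >-> e x y} ->
    ham_path e' S u v p ->
  ham_path e (f @: S) (f u) (f v) (map f p).
Proof.
move=> f_inj f_mono [U E P L]; split.
- by rewrite -map_cons map_inj_uniq.
- rewrite -E -map_cons; apply/setP => z; rewrite inE.
  by apply/mapP/imsetP => -[w w_in ->]; exists w; rewrite ?inE in w_in *.
- by rewrite path_map (eq_path (e' := e')).
- by rewrite last_map L.
Qed.

Lemma ham_connected_through_imset (T T' : finType) (e : rel T) (e' : rel T')
    (f : T' -> T) S (E' : rel T') (E : rel T) :
    injective f -> {mono f : x y / e' x y >-> e x y} ->
    {homo f : x y / E' x y >-> E x y} ->
    ham_connected_through e' S E' -> ham_connected_through e (f @: S) E.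
Proof.
move=> f_inj f_mono f_homo H _ _ /imsetP [u Su ->] /imsetP [v Sv ->] fuv.
have uv : u != v by apply: contraNneq fuv => ->.
have [p Hp [s1 [s2 [x [y [def_p Exy]]]]]] := H u v Su Sv uv.
exists (map f p); first exact: ham_path_map.
exists (map f s1), (map f s2), (f x), (f y); split; last exact: f_homo.
by rewrite -map_cons def_p map_cat.
Qed.

Lemma eq_ham_connected_through (T : finType) (e e' : rel T) S E :
  e =2 e' -> ham_connected_through e S E -> ham_connected_through e' S E.
Proof.
move=> ee' H u v Su Sv uv; have [p [U Ep P L] HE] := H u v Su Sv uv.
by exists p; rewrite // /ham_path -(eq_path ee').
Qed.

Lemma card_gt2_avoid (T T' : finType) (f : T -> T') (A : {set T}) a b :
  injective f -> 2 < #|A| -> exists2 t, t \in A & f t \notin [set a; b].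
Proof.
move=> f_inj A_big; have : 0 < #|f @: A :\: [set a; b]|.
  rewrite cardsD card_imset // subn_gt0 (leq_ltn_trans _ A_big) //.
  by rewrite (leq_trans (subset_leq_card (subsetIr _ _))) // cards2 ltnS leq_b1.
by case/card_gt0P => _ /setDP [/imsetP [t t_in ->] fab]; exists t.
Qed.

Section ArrangementGraph.
Variables n k : nat.
Implicit Types (x y : arr_vertex n k) (p q : 'I_k) (s : 'I_n).

Lemma arr_adjC : symmetric (@arr_adj n k).
Proof.
move=> x y; rewrite /arr_adj; congr (_ == 1).
by apply: eq_card => p; rewrite !inE eq_sym.
Qed.

Lemma arr_adj_neq x y : arr_adj x y -> x != y.
Proof.
apply: contraTneq => ->; rewrite /arr_adj (_ : [set _ | _] = set0) ?cards0 //.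
by apply/setP => p; rewrite !inE eqxx.
Qed.

Lemma arr_vertex_neqP x y : x != y -> exists q, tnth (val x) q != tnth (val y) q.
Proof.
move=> xy; apply/existsP; apply: contraNT xy; rewrite negb_exists => /forallP xy.
by apply/eqP/val_inj/eq_from_tnth => p; apply/eqP; rewrite -[_ == _]negbK.
Qed.

(* Junk value [x] when [s] already occurs in [x]. *)
Definition arr_set x q s : arr_vertex n k :=
  insubd x [tuple if p == q then s else tnth (val x) p | p < k].

Lemma tnth_arr_set x q s p : s \notin val x ->
  tnth (val (arr_set x q s)) p = if p == q then s else tnth (val x) p.
Proof.
move=> s_notin; rewrite insubdK ?tnth_mktuple //.
apply/(tuple_uniqP [tuple _ | _ < _]) => p1 p2; rewrite !tnth_mktuple.
have x_inj := tuple_uniqP _ (valP x).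
case: eqP => [->|_]; case: eqP => [->|_] // E; last exact: x_inj.
  by move: s_notin; rewrite E mem_tnth.
by move: s_notin; rewrite -E mem_tnth.
Qed.

Lemma arr_adj_set x q s : s \notin val x -> arr_adj x (arr_set x q s).
Proof.
move=> s_notin; rewrite /arr_adj (_ : [set _ | _] = [set q]) ?cards1 //.
apply/setP => p; rewrite !inE tnth_arr_set //; case: (p =P q) => [->|_].
  by apply: contraNneq s_notin => <-; apply: mem_tnth.
by rewrite eqxx.
Qed.

Lemma arr_setK x q s : s \notin val x -> arr_set (arr_set x q s) q (tnth (val x) q) = x.
Proof.
move=> s_notin; have xq_notin : tnth (val x) q \notin val (arr_set x q s).
  apply/tnthP => -[p]; rewrite tnth_arr_set //; case: (p =P q) => [_ xq_s|pq].
    by move: s_notin; rewrite -xq_s mem_tnth.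
  by move/(tuple_uniqP _ (valP x))/esym.
apply/val_inj/eq_from_tnth => p; rewrite !tnth_arr_set //.
by case: (p =P q) => [->|].
Qed.

Lemma card_arr_over (A : pred 'I_n) :
  #|[set x : arr_vertex n k | all A (val x)]| = #|A| ^_ k.
Proof.
rewrite -(card_imset _ val_inj) -card_uniq_tuples; apply: eq_card => t.
rewrite !inE; apply/imsetP/andP => [[x Ax ->]|[At t_uniq]].
  by rewrite inE in Ax; split; last exact: (valP x).
by exists (Sub t t_uniq); rewrite ?inE.
Qed.

End ArrangementGraph.

Section Insertion.
Variables (n k : nat) (i : 'I_k.+1) (j : 'I_n.+1).
Implicit Types (t : k.-tuple 'I_n) (x y : arr_vertex n k).

Definition ins_tuple (t : k.-tuple 'I_n) : k.+1.-tuple 'I_n.+1 :=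
  [tuple if unlift i p is Some p' then lift j (tnth t p') else j | p < k.+1].

Lemma tnth_ins_tuple t : tnth (ins_tuple t) i = j.
Proof. by rewrite tnth_mktuple unlift_none. Qed.

Lemma tnth_ins_tuple_lift t p : tnth (ins_tuple t) (lift i p) = lift j (tnth t p).
Proof. by rewrite tnth_mktuple liftK. Qed.

Lemma ins_tuple_uniq t : uniq t -> uniq (ins_tuple t).
Proof.
move=> /tuple_uniqP t_inj; apply/tuple_uniqP => p1 p2.
case: (unliftP i p1) => [q1|] ->; case: (unliftP i p2) => [q2|] ->;
  rewrite ?tnth_ins_tuple_lift ?tnth_ins_tuple //.
- by move/lift_inj/t_inj ->.
- by move=> E; have := neq_lift j (tnth t q1); rewrite E eqxx.
- by move=> E; have := neq_lift j (tnth t q2); rewrite -E eqxx.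
Qed.

Definition arr_ins (x : arr_vertex n k) : arr_vertex n.+1 k.+1 :=
  exist _ (ins_tuple (val x)) (ins_tuple_uniq (valP x)).

Lemma arr_ins_inj : injective arr_ins.
Proof.
move=> x y /(congr1 (fun w => tnth (val w) (lift i _))) xy.
apply/val_inj/eq_from_tnth => p.
by have := xy p; rewrite /= !tnth_ins_tuple_lift => /lift_inj.
Qed.

Lemma arr_adj_ins : {mono arr_ins : x y / arr_adj x y}.
Proof.
move=> x y; rewrite /arr_adj; congr (_ == 1).
rewrite -(card_imset _ (@lift_inj _ i)); apply: eq_card => q; rewrite !inE /=.
case: (unliftP i q) => [p|] ->.
  rewrite !tnth_ins_tuple_lift (inj_eq (@lift_inj _ j)) mem_imset ?inE //.
  exact: lift_inj.
rewrite !tnth_ins_tuple eqxx; apply/esym/negbTE/imsetP => -[p _ E].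
by have := neq_lift i p; rewrite -E eqxx.
Qed.

Lemma mem_arr_ins_lift x s : (lift j s \in val (arr_ins x)) = (s \in val x).
Proof.
apply/tnthP/tnthP => [[q]|[p ->]]; last first.
  by exists (lift i p); rewrite tnth_ins_tuple_lift.
case: (unliftP i q) => [p|] ->; rewrite ?tnth_ins_tuple_lift ?tnth_ins_tuple.
  by move/lift_inj ->; exists p.
by move=> E; have := neq_lift j s; rewrite E eqxx.
Qed.

Lemma arr_sub1E : 0 < n -> arr_sub i [set j] = arr_ins @: setT.
Proof.
move=> n_gt0; apply/setP => w; rewrite !inE.
apply/eqP/imsetP => [wi|[x _ ->]]; last exact: tnth_ins_tuple.
have w_lift p : tnth (val w) (lift i p) != j.
  by rewrite -wi (inj_eq (tuple_uniqP _ (valP w))) eq_sym neq_lift.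
pose t := [tuple odflt (Ordinal n_gt0) (unlift j (tnth (val w) (lift i p))) | p < k].
have t_lift p : lift j (tnth t p) = tnth (val w) (lift i p).
  rewrite tnth_mktuple; case: (unliftP j _) => [y ->|E] //.
  by move: (w_lift p); rewrite E eqxx.
have t_uniq : uniq t.
  apply/tuple_uniqP => p1 p2 /(congr1 (lift j)); rewrite !t_lift.
  by move/(tuple_uniqP _ (valP w))/lift_inj.
exists (exist _ t t_uniq) => //; apply/val_inj/eq_from_tnth => q /=.
by case: (unliftP i q) => [p|] ->; rewrite ?tnth_ins_tuple_lift ?tnth_ins_tuple.
Qed.

End Insertion.

Section ArrangementSubgraphs.
Variables (n k : nat) (i : 'I_k).

Lemma arr_subU (I J : {set 'I_n}) : arr_sub i (I :|: J) = arr_sub i I :|: arr_sub i J.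
Proof. by apply/setP => w; rewrite !inE. Qed.

Lemma arr_sub_disjoint (I J : {set 'I_n}) :
  [disjoint I & J] -> [disjoint arr_sub i I & arr_sub i J].
Proof.
rewrite -!setI_eq0 => /eqP IJ; apply/eqP/setP => w.
by rewrite !inE -in_setI IJ inE.
Qed.

Lemma big_arr_sub1 (s : seq 'I_n) :
  \bigcup_(j <- s) arr_sub i [set j] = arr_sub i [set j in s].
Proof.
elim: s => [|j s IH]; first by rewrite big_nil; apply/setP => w; rewrite !inE.
by rewrite big_cons IH; apply/setP => w; rewrite !inE.
Qed.

End ArrangementSubgraphs.

Definition avoid_edge n k (b : 'I_n) : rel (arr_vertex n k) :=
  [rel x y | (b \notin val x) && (b \notin val y)].

Definition arr_ham_avoid n k : Prop :=
  forall b : 'I_n, ham_connected_through (@arr_adj n k) setT (avoid_edge b).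

Lemma arr_ham_avoid1 n : 3 < n -> arr_ham_avoid n 1.
Proof.
move=> n_gt3 b.
apply: (complete_ham_through _ (P := fun x : arr_vertex n 1 => b \notin val x)).
- move=> x y /arr_vertex_neqP [p xy].
  rewrite /arr_adj (_ : [set _ | _] = [set p]) ?cards1 //.
  by apply/setP => q; rewrite !inE (ord1 q) (ord1 p) in xy *; rewrite xy eqxx.
- move=> x y; rewrite !negbK => /tnthP [p xp] /tnthP [q yq].
  apply/val_inj/eq_from_tnth => r.
  by rewrite (ord1 r) -(ord1 p) -xp (ord1 p) -(ord1 q) -yq.
- rewrite -cardsT (eq_card (B := [set x : arr_vertex n 1 | all predT (val x)])).
    by rewrite card_arr_over ffactn1 cardT size_enum_ord.
  by move=> x; rewrite !inE all_predT.
Qed.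

(* [ord_enum] does not reduce in the kernel, as [insub] goes through the
   opaque [idP]; [insub_eq] does. *)
Definition ord_iota n : seq 'I_n := pmap (insub_eq _) (iota 0 n).

Lemma mem_ord_iota n (p : 'I_n) : p \in ord_iota n.
Proof.
by rewrite /ord_iota (eq_pmap (insub_eqE _)) mem_pmap_sub mem_iota add0n ltn_ord.
Qed.

Lemma ord_iota_uniq n : uniq (ord_iota n).
Proof. by rewrite /ord_iota (eq_pmap (insub_eqE _)) pmap_sub_uniq ?iota_uniq. Qed.

Definition arr_adjb n k (x y : arr_vertex n k) : bool :=
  count (fun p => tnth (val x) p != tnth (val y) p) (ord_iota k) == 1.

Lemma arr_adjbE n k : @arr_adjb n k =2 @arr_adj n k.
Proof.
move=> x y; rewrite /arr_adjb /arr_adj -size_filter.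
rewrite -(card_uniqP (filter_uniq _ (ord_iota_uniq k))); congr (_ == 1).
by apply: eq_card => p; rewrite !inE mem_filter mem_ord_iota andbT.
Qed.

Definition arr_vertices42 : seq (arr_vertex 4 2) :=
  pmap (insub_eq _) [seq [tuple a; b] | a <- ord_iota 4, b <- ord_iota 4].

Lemma mem_arr_vertices42 x : x \in arr_vertices42.
Proof.
rewrite /arr_vertices42 (eq_pmap (insub_eqE _)) mem_pmap_sub.
case: x => -[[|a [|b []]] // t_size] t_uniq; rewrite [val _]/=.
rewrite (_ : Tuple t_size = [tuple a; b]); last exact: val_inj.
by apply: allpairs_f; apply: mem_ord_iota.
Qed.

Fixpoint first_some (A B : Type) (f : A -> option B) (s : seq A) : option B :=
  if s is x :: s' then if f x is Some y then Some y else first_some f s' else None.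

Section CertifiedPaths.
Variables (T : eqType) (e E : rel T) (vs : seq T).

Fixpoint has_edgeb (s : seq T) : bool :=
  if s is x :: ((y :: _) as s') then E x y || has_edgeb s' else false.

Lemma has_edgebP s : has_edgeb s -> has_edge E s.
Proof.
elim: s => [|x [|y s] IH] //= /orP [Exy|/IH [s1 [s2 [z [w [-> Ezw]]]]]].
  exact: has_edge_cons2.
by exists (x :: s1), s2, z, w.
Qed.

(* [r] is the path found so far, reversed; the target [v] may only be entered
   at the last step. *)
Fixpoint ham_search (fuel : nat) (v : T) (r : seq T) : option (seq T) :=
  match fuel, r with
  | 0, _ => if has_edgeb (rev r) then Some (rev r) else None
  | f.+1, x :: _ => first_some (fun y =>
      if [&& e x y, y \notin r & (f == 0) == (y == v)]
      then ham_search f v (y :: r) else None) vs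
  | _, [::] => None
  end.

(* The search is untrusted: only the path it returns is checked. *)
Definition ham_certified (u v : T) : bool :=
  if ham_search (size vs).-1 v [:: u] is Some (_ :: p) then
    [&& uniq (u :: p), all (mem (u :: p)) vs, path e u p, last u p == v
      & has_edgeb (u :: p)]
  else false.

End CertifiedPaths.

Lemma ham_certified_through (T : finType) (e E : rel T) (vs : seq T) :
    (forall x, x \in vs) -> (forall u v, u != v -> ham_certified e E vs u v) ->
  ham_connected_through e setT E.
Proof.
move=> vs_full cert u v _ _ uv; move: (cert u v uv); rewrite /ham_certified.
case: ham_search => [[|_ p]|] // /and5P [p_uniq p_full p_path /eqP p_last p_edge].
exists p; last exact: has_edgebP.
by split=> //; apply/setP => x; rewrite in_setT in_set; apply: (allP p_full).
Qed.

Lemma arr_ham_avoid42 : arr_ham_avoid 4 2.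
Proof.
(* An [if] rather than [==>], which the VM would evaluate eagerly, running the
   search also for [u = v]. *)
have cert : all (fun b => all (fun u => all (fun v =>
    if u != v then ham_certified (@arr_adjb 4 2) (avoid_edge b) arr_vertices42 u v
    else true) arr_vertices42) arr_vertices42) (ord_iota 4) by vm_compute.
move=> b; apply: (eq_ham_connected_through (@arr_adjbE 4 2)).
apply: (ham_certified_through mem_arr_vertices42) => u v uv.
move: cert => /allP /(_ b (mem_ord_iota b)) /allP /(_ u (mem_arr_vertices42 u)).
by move=> /allP /(_ v (mem_arr_vertices42 v)); rewrite uv.
Qed.

Section Blocks.
Variables (n k : nat) (i : 'I_k.+1).
Hypotheses (k_gt0 : 0 < k) (k_lt_n : k < n) (n_gt3 : 3 < n).
Hypothesis A_ham : arr_ham_avoid n k.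
Local Notation adj := (@arr_adj n.+1 k.+1).
Local Notation block j := (arr_sub i [set j]).

Lemma block_ham_through (b j : 'I_n.+1) :
  b != j -> ham_connected_through adj (block j) (avoid_edge b).
Proof.
move=> bj; case: (unliftP j b) => [c def_b|bj']; last by rewrite bj' eqxx in bj.
rewrite arr_sub1E; last by apply: leq_ltn_trans n_gt3.
apply: (ham_connected_through_imset (@arr_ins_inj n k i j) (@arr_adj_ins n k i j)
  _ (A_ham c)).
by move=> x y /andP [cx cy]; apply/andP; rewrite def_b !mem_arr_ins_lift.
Qed.

Lemma block_ham (j : 'I_n.+1) : ham_connected adj (block j).
Proof.
have n_gt0 : 0 < n by apply: leq_ltn_trans n_gt3.
apply: ham_connected_throughW (block_ham_through (b := lift j (Ordinal n_gt0)) _).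
by rewrite eq_sym neq_lift.
Qed.

Lemma block_link (j j' : 'I_n.+1) : j != j' -> forall x0 z0,
  exists x y, [/\ x \in block j, y \in block j', x != x0, y != z0 & adj x y].
Proof.
move=> jj' x0 z0; case: (unliftP j j') => [c def_j'|j'j]; last first.
  by rewrite j'j eqxx in jj'.
have A_big : 2 < #|[set t : arr_vertex n k | c \notin val t]|.
  rewrite (eq_card (B := [set t : arr_vertex n k | all (predC (pred1 c)) (val t)])).
    rewrite card_arr_over (eq_card (B := predC1 c)) // cardC1 card_ord.
    rewrite -(prednK k_gt0) ffactnS (leq_trans _ (leq_pmulr _ _)) ?ffact_gt0 //; lia.
  by move=> t; rewrite !inE all_predC has_pred1.
have [t t_in t_avoid] := card_gt2_avoid x0 (arr_set z0 i j) (@arr_ins_inj n k i j) A_big.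
set x := arr_ins i j t in t_avoid *.
have xi : tnth (val x) i = j by apply: tnth_ins_tuple.
have j'_notin : j' \notin val x by rewrite def_j' mem_arr_ins_lift; rewrite inE in t_in.
exists x, (arr_set x i j'); split.
- by rewrite !inE xi.
- by rewrite !inE tnth_arr_set // eqxx.
- by apply: contraNneq t_avoid => ->; rewrite !inE eqxx.
- by apply: contraNneq t_avoid => <-; rewrite -{1}xi arr_setK // !inE eqxx orbT.
- exact: arr_adj_set.
Qed.

Lemma arr_sub_ham_through_neq (I : {set 'I_n.+1}) b u v :
    u \in arr_sub i I -> v \in arr_sub i I -> tnth (val u) i != tnth (val v) i ->
  exists2 p, ham_path adj (arr_sub i I) u v p & has_edge (avoid_edge b) (u :: p).
Proof.
rewrite !inE => uI vI ac.
set a := tnth (val u) i in uI ac *; set c := tnth (val v) i in vI ac *.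
pose js := rcons [seq j <- enum I | (j != a) && (j != c)] c.
have js_uniq : uniq (a :: js).
  rewrite cons_uniq rcons_uniq mem_rcons inE negb_or ac !mem_filter !eqxx andbF.
  by rewrite filter_uniq ?enum_uniq.
have js_I : [set j in a :: js] = I.
  apply/setP => j; rewrite !inE mem_rcons inE mem_filter mem_enum.
  by case: (eqVneq j a) => [->|] //=; case: (eqVneq j c) => [->|].
pose E j : rel (arr_vertex n.+1 k.+1) :=
  if j == b then (fun _ _ => true) else avoid_edge b.
have [p Hp p_E] :
    exists2 p, ham_path adj (\bigcup_(j <- a :: js) block j) u v p &
      forall j, j \in a :: js -> has_edge (E j) (u :: p).
  apply: ham_path_chain => //.
  - by move=> j j' jj'; apply: arr_sub_disjoint; rewrite disjoints1 inE.
  - move=> j; rewrite /E; case: eqP => [_|/eqP jb].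
      exact/ham_connected_through_any/block_ham.
    by apply: block_ham_through; rewrite eq_sym.
  - exact: block_link.
  - by rewrite !inE.
  - by rewrite last_rcons !inE.
  - by apply: contraNneq ac => uv; rewrite /a /c uv.
exists p; first by rewrite -js_I -big_arr_sub1.
have [ab|ab] := eqVneq a b.
  have cb : c != b by rewrite -ab eq_sym.
  have c_in : c \in a :: js by rewrite inE mem_rcons mem_head orbT.
  by have := p_E c c_in; rewrite /E (negbTE cb).
by have := p_E a (mem_head _ _); rewrite /E (negbTE ab).
Qed.

Lemma arr_sub_ham_splice (I : {set 'I_n.+1}) a u v :
    ham_connected adj (arr_sub i (I :\ a)) -> a \in I -> I :\ a != set0 ->
    u \in block a -> v \in block a -> u != v ->
  exists p, ham_path adj (arr_sub i I) u v p.
Proof.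
move=> IH aI /set0Pn [b b_in] ua va uv.
have ba : b != a by move: b_in; rewrite !inE => /andP [].
have [p Hp [s1 [s2 [x [y [def_p /andP [bx b_y]]]]]]] := block_ham_through ba ua va uv.
have [xa ya exy] := ham_path_edge Hp def_p.
have xi : tnth (val x) i = a by apply/eqP; rewrite !inE in xa.
have yi : tnth (val y) i = a by apply/eqP; rewrite !inE in ya.
set x' := arr_set x i b; set y' := arr_set y i b.
have x'_in : x' \in arr_sub i (I :\ a) by rewrite inE tnth_arr_set // eqxx.
have y'_in : y' \in arr_sub i (I :\ a) by rewrite inE tnth_arr_set // eqxx.
have x'y' : x' != y'.
  apply: contraTneq exy => x'y'.
  rewrite -(arr_setK i bx) -(arr_setK i b_y) xi yi -/x' -/y' x'y'.
  by apply/negP => /arr_adj_neq; rewrite eqxx.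
have [q Hq] := IH x' y' x'_in y'_in x'y'.
have a_disj : [disjoint block a & arr_sub i (I :\ a)].
  by apply: arr_sub_disjoint; rewrite disjoints1 !inE eqxx.
have ey'y : adj y' y by rewrite arr_adjC arr_adj_set.
have [p' Hp'] := ham_path_splice Hp def_p Hq a_disj (arr_adj_set i bx) ey'y.
by exists p'; rewrite -(setD1K aI) arr_subU.
Qed.

Lemma arr_sub_ham (I : {set 'I_n.+1}) :
  I != set0 -> ham_connected adj (arr_sub i I).
Proof.
have [m] := ubnP #|I|; elim: m I => // m IH I I_lt I0 u v uI vI uv.
have [uv_i|uv_i] := eqVneq (tnth (val u) i) (tnth (val v) i); last first.
  by have [p Hp _] := arr_sub_ham_through_neq (tnth (val u) i) uI vI uv_i; exists p.
set a := tnth (val u) i in uv_i.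
have aI : a \in I by rewrite inE in uI.
have ua : u \in block a by rewrite !inE.
have va : v \in block a by rewrite !inE -uv_i.
have [Ia|Ia] := eqVneq (I :\ a) set0.
  by move: (block_ham ua va uv); rewrite -(setD1K aI) Ia setU0.
apply: (arr_sub_ham_splice (IH _ _ Ia)) => //.
by move: I_lt; rewrite (cardsD1 a I) aI.
Qed.

End Blocks.

Lemma arr_ham_avoid_step n k :
  0 < k -> k < n -> 3 < n -> arr_ham_avoid n k -> arr_ham_avoid n.+1 k.+1.
Proof.
move=> k_gt0 k_lt_n n_gt3 A_ham b u v _ _ uv; have [q uv_q] := arr_vertex_neqP uv.
have arr_subT : arr_sub q [set: 'I_n.+1] = setT by apply/setP => w; rewrite !inE.
by rewrite -arr_subT; apply: arr_sub_ham_through_neq; rewrite ?arr_subT.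
Qed.

Lemma arr_ham_avoid_all n k : 0 < k -> k + 2 <= n -> 3 < n -> arr_ham_avoid n k.
Proof.
elim: k n => [//|k IH] [//|n] _ kn n_gt3.
have [->|k_gt0] := posnP k; first exact: arr_ham_avoid1.
have [n_le3|n_gt3'] := leqP n 3.
  have [-> ->] : n = 3 /\ k = 1 by lia.
  exact: arr_ham_avoid42.
by apply: arr_ham_avoid_step; [lia | lia | lia | apply: IH; lia].
Qed.

Theorem lemma4 (n k : nat) (i : 'I_k) (I : {set 'I_n}) :
  5 <= n -> 2 <= k -> 2 <= n - k -> I != set0 ->
  ham_connected (@arr_adj n k) (arr_sub i I).
Proof.
case: n I => [//|n] I; case: k i => [[]//|k] i n_ge5 k_ge2 nk_ge2 I0.
have A_ham : arr_ham_avoid n k by apply: arr_ham_avoid_all; lia.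
by apply: arr_sub_ham => //; lia.
Qed.
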